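(* Let $n$ be a perfect square divisible by $5^4$. Then $C_{S(n)^*}\le 7$.
   Context: For a natural number $n$, $\mathbb Z_n=\mathbb Z/n\mathbb Z$, $S(n)=\{x^2:x\in\mathbb Z_n\}$, $S(n)^*=S(n)\setminus\{0\}$. For $A\subseteq\mathbb Z_n$, a sequence $(y_1,\dots,y_t)$ ($t\ge1$) in $\mathbb Z_n$ is an $A$-weighted zero-sum sequence if there exist $a_1,\dots,a_t\in A$ with $\sum a_iy_i=0$. $C_A(n)$ is the least positive integer $t$ such that every sequence of length $t$ in $\mathbb Z_n$ has a nonempty subsequence of consecutive terms that is an $A$-weighted zero-sum sequence; $C_{S(n)^*}=C_{S(n)^*}(n)$. *)

From Stdlib Require Import ClassicalEpsilon.
From mathcomp Require Import all_boot all_order all_algebra.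
Set Implicit Arguments. Unset Strict Implicit. Unset Printing Implicit Defensive.
Import GRing.Theory.
Local Open Scope ring_scope.

Definition Sq (n : nat) : {set 'Z_n} := [set x ^+ 2 | x : 'Z_n].
Definition Sq_star (n : nat) : {set 'Z_n} := Sq n :\ 0.

Definition weighted_zero_sum (n : nat) (A : {set 'Z_n}) (y : seq 'Z_n) : bool :=
  (0 < size y)%N &&
  [exists a : (size y).-tuple 'Z_n,
     all (fun x => x \in A) a && (\sum_(i < size y) a`_i * y`_i == 0)].

Definition C_works (n : nat) (A : {set 'Z_n}) (t : nat) : bool :=
  (0 < t)%N &&
  [forall s : t.-tuple 'Z_n, exists i : 'I_t.+1, exists j : 'I_t.+1,
     (i < j)%N && weighted_zero_sum A (drop i (take j s))].

Definition C_A (n : nat) (A : {set 'Z_n}) : nat :=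
  match excluded_middle_informative (exists t, C_works A t) with
  | left h => ex_minn h
  | right _ => 0%N
  end.

(* Write n = (25 K)^2 (the case n = 0 is degenerate).  Weighting a block of
   terms c_k by the nonzero squares (K t_k)^2 reduces the bound C <= 5 to a
   statement about residues modulo 625: among any five of them there is a
   consecutive block with sum t_k^2 c_k = 0 (mod 625) and every t_k^2 nonzero
   modulo 625.  A term divisible by 25 is such a block on its own (t = 5).
   Otherwise multiplying c_k by a unit square s_k^2 does not change the
   problem (replace t_k by t_k s_k) and normalizes c_k to one of 1, 2, 5, 10;
   the 4^5 normalized sequences are then settled by a certificate trie that is
   checked by computation. *)

From Stdlib Require Import ClassicalEpsilon ZArith.
From mathcomp Require Import all_boot all_order all_algebra zify.
Import GRing.Theory.

Lemma C_A_leq n (A : {set 'Z_n}) t : C_works A t -> C_A A <= t.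
Proof.
rewrite /C_A => A_t; case: excluded_middle_informative => // ex_t.
by case: ex_minnP => m _ /(_ t A_t).
Qed.

Section ZeroModulus.
Local Open Scope ring_scope.

(* ['Z_0] is [Z/2Z], where [1] is a nonzero square and [1 + 1 = 0]. *)
Lemma C_works_Sq_star0 : C_works (Sq_star 0) 2.
Proof.
have unit_weights (y : seq 'Z_0) :
    (0 < size y)%N -> \sum_(k < size y) y`_k = 0 ->
    weighted_zero_sum (Sq_star 0) y.
  move=> y_gt0 y_sum; rewrite /weighted_zero_sum y_gt0; apply/existsP.
  exists [tuple 1 | _ < size y]; apply/andP; split.
    apply/allP=> _ /mapP[_ _ ->]; rewrite in_setD1 oner_eq0 /=.
    by apply/imsetP; exists 1; rewrite ?expr1n.
  apply/eqP; rewrite -[RHS]y_sum; apply: eq_bigr=> k _.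
  by rewrite -tnth_nth tnth_mktuple mul1r.
apply/forallP=> /= s; apply/existsP.
case: s => -[|a [|b []]] //= _.
have [-> | a1] := eqVneq a 0.
  exists (inord 0); apply/existsP; exists (inord 1).
  by rewrite !inordK //= unit_weights ?big_ord1.
have [-> | b1] := eqVneq b 0.
  exists (inord 1); apply/existsP; exists (inord 2).
  by rewrite !inordK //= unit_weights ?big_ord1.
have nz_one (x : 'Z_0) : x != 0 -> x = 1.
  by case: x => -[|[|]] // ? _; apply: val_inj.
exists (inord 0); apply/existsP; exists (inord 2).
rewrite !inordK //= unit_weights //.
by rewrite (nz_one a a1) (nz_one b b1) big_ord_recr big_ord1; apply: val_inj.
Qed.

End ZeroModulus.

Lemma square_625_multiple n : (exists m, n = m ^ 2) -> 5 ^ 4 %| n -> 0 < n ->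
  exists2 K, 0 < K & n = (25 * K) ^ 2.
Proof.
move=> [m ->] dvd_m2; rewrite expn_gt0 orbF => m_gt0.
have : 2 <= logn 5 m.
  suff : 4 <= 2 * logn 5 m by lia.
  by rewrite -lognX -pfactor_dvdn // expn_gt0 m_gt0.
rewrite -pfactor_dvdn // => /dvdnP[K def_m].
exists K; last by rewrite def_m mulnC.
by rewrite lt0n; apply: contraTneq m_gt0 => K0; rewrite def_m K0.
Qed.

Definition square_class_reps : seq nat := [:: 1; 2; 5; 10].

Section SquareNormalizer.
Local Open Scope Z_scope.

Definition residue_candidates : seq Z := map Z.of_nat (iota 1 624).

(* An untrusted search in binary arithmetic; only its answers are checked. *)
Definition square_normalizer (x : nat) : nat :=
  let reps := map Z.of_nat square_class_reps in
  let normalizes s :=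
    negb (Z.eqb (s mod 5) 0) && has (Z.eqb ((s * s * Z.of_nat x) mod 625)) reps in
  Z.to_nat (nth 0 residue_candidates (find normalizes residue_candidates)).

End SquareNormalizer.

Lemma square_normalizer_spec :
  all (fun x => (25 %| x) || let s := square_normalizer x in
         coprime s 5 && (s ^ 2 %% 625 * x %% 625 \in square_class_reps))
      (iota 0 625).
Proof. vm_compute. reflexivity. Qed.

Lemma square_normalizerP x : ~~ (25 %| x) ->
  let s := square_normalizer (x %% 625) in
  coprime s 5 /\ s ^ 2 * x %% 625 \in square_class_reps.
Proof.
move=> x25; have x_lt : x %% 625 \in iota 0 625 by rewrite mem_iota ltn_mod.
move: (allP square_normalizer_spec _ x_lt).
rewrite {1}/dvdn modn_dvdm // -/(dvdn 25 x) (negPf x25) /= => /andP[-> s_rep].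
by rewrite modnMml modnMmr in s_rep.
Qed.

Lemma nonzero_square_mod625 t s : 0 < t < 25 -> coprime s 5 ->
  ~~ (625 %| (t * s) ^ 2).
Proof.
case/andP=> t_gt0 t_lt25 s5; rewrite expnMn mulnC Gauss_dvdr; last first.
  by rewrite (_ : 625 = 5 ^ 4) // coprimeXl // coprime_sym coprimeXl.
have t2_gt0 : 0 < t ^ 2 by rewrite expn_gt0 t_gt0.
apply/negP=> /(dvdn_leq t2_gt0).
by rewrite leqNgt (_ : 625 = 25 ^ 2) // ltn_exp2r // t_lt25.
Qed.

Definition weighted_sum (ts rs : seq nat) : nat :=
  sumn [seq nth 0 ts k ^ 2 * nth 0 rs k | k <- iota 0 (size ts)].

Lemma weighted_sumE ts rs :
  weighted_sum ts rs = \sum_(k < size ts) nth 0 ts k ^ 2 * nth 0 rs k.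
Proof.
rewrite -(big_mkord xpredT (fun k => nth 0 ts k ^ 2 * nth 0 rs k)).
by rewrite /weighted_sum sumnE big_map /index_iota subn0.
Qed.

(* Weights [0 < t < 25] keep the unary arithmetic cheap and make [t ^ 2] a
   nonzero square modulo 625. *)
Definition zero_block_cert (rs : seq nat) (i : nat) (ts : seq nat) : bool :=
  [&& 0 < size ts, i + size ts <= size rs, all (fun t => 0 < t < 25) ts
    & 625 %| weighted_sum ts (drop i rs)].

Lemma zero_block_cert_cat rs q i ts :
  zero_block_cert rs i ts -> zero_block_cert (rs ++ q) i ts.
Proof.
case/and4P=> ts_gt0 ts_le ts_ok dvd_sum; apply/and4P; split=> //.
  by rewrite size_cat; apply: leq_trans ts_le (leq_addr _ _).
suff -> : weighted_sum ts (drop i (rs ++ q)) = weighted_sum ts (drop i rs).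
  by [].
congr sumn; apply/eq_in_map=> k.
rewrite mem_iota add0n => /andP[_ lt_k]; rewrite !nth_drop nth_cat ifT //.
by apply: leq_trans ts_le; rewrite ltn_add2l.
Qed.

Inductive zero_block_trie :=
  | Found of nat & seq nat
  | Branch of zero_block_trie & zero_block_trie & zero_block_trie
      & zero_block_trie.

(* The children of a [Branch] follow [square_class_reps]; at a [Found i ts]
   leaf the prefix read so far already carries the certificate [(i, ts)]. *)
Fixpoint trie_covers depth p T {struct T} : bool :=
  match T with
  | Found i ts => zero_block_cert p i ts
  | Branch T1 T2 T5 T10 =>
      if depth is d.+1 then
        [&& trie_covers d (rcons p 1) T1, trie_covers d (rcons p 2) T2,
            trie_covers d (rcons p 5) T5 & trie_covers d (rcons p 10) T10]
      else false
  end.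

Lemma trie_coversP d p T : trie_covers d p T ->
  forall q, size q = d -> all (mem square_class_reps) q ->
  exists i ts, zero_block_cert (p ++ q) i ts.
Proof.
elim: T d p => [i ts | T1 IH1 T2 IH2 T5 IH5 T10 IH10] d p /=.
  by move=> cert q _ _; exists i, ts; exact: zero_block_cert_cat.
case: d => [|d] //= /and4P[c1 c2 c5 c10] [|r q] //= [size_q].
case/andP=> r_rep q_reps.
rewrite -cat_rcons.
by move: r_rep; rewrite !inE => /or4P[] /eqP->;
  [ exact: IH1 _ _ c1 _ size_q q_reps | exact: IH2 _ _ c2 _ size_q q_reps
  | exact: IH5 _ _ c5 _ size_q q_reps | exact: IH10 _ _ c10 _ size_q q_reps ].
Qed.

Definition zero_block_trie5 : zero_block_trie :=
  (Branch (Branch (Found 0 [:: 15; 20]) (Branch (Found 0 [:: 8; 14; 13])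
  (Found 1 [:: 15; 20]) (Branch (Found 0 [:: 3; 9; 9; 7])
  (Found 1 [:: 1; 11; 3]) (Found 2 [:: 5; 10]) (Branch
  (Found 0 [:: 2; 6; 6; 6; 3]) (Found 1 [:: 1; 5; 7; 2])
  (Found 2 [:: 2; 6; 7]) (Found 3 [:: 5; 10]))) (Branch
  (Found 0 [:: 1; 7; 7; 6]) (Found 1 [:: 5; 10; 10]) (Branch
  (Found 0 [:: 2; 6; 6; 6; 3]) (Found 1 [:: 1; 6; 7; 3]) (Found 3 [:: 5; 10])
  (Found 2 [:: 5; 5; 5])) (Found 2 [:: 5; 10]))) (Branch
  (Found 0 [:: 5; 10; 10]) (Branch (Found 0 [:: 3; 9; 9; 7])
  (Found 2 [:: 15; 20]) (Found 1 [:: 2; 10; 9]) (Branch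
  (Found 0 [:: 2; 6; 6; 6; 3]) (Found 2 [:: 5; 10; 10])
  (Found 1 [:: 1; 5; 7; 4]) (Found 3 [:: 5; 10]))) (Found 1 [:: 5; 10])
  (Branch (Found 0 [:: 1; 5; 7; 3]) (Branch (Found 0 [:: 2; 6; 6; 6; 3])
  (Found 3 [:: 15; 20]) (Found 1 [:: 1; 7; 5; 4]) (Found 2 [:: 7; 5; 14]))
  (Found 1 [:: 2; 6; 7]) (Found 2 [:: 5; 10]))) (Branch
  (Found 0 [:: 2; 11; 6]) (Branch (Found 0 [:: 1; 7; 7; 6])
  (Found 2 [:: 15; 20]) (Branch (Found 0 [:: 2; 6; 6; 6; 3])
  (Found 2 [:: 1; 11; 3]) (Found 3 [:: 5; 10]) (Found 1 [:: 3; 5; 5; 6]))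
  (Found 1 [:: 7; 5; 14])) (Branch (Found 0 [:: 1; 7; 5; 3]) (Branch
  (Found 0 [:: 2; 6; 6; 6; 3]) (Found 3 [:: 15; 20]) (Found 2 [:: 2; 10; 9])
  (Found 1 [:: 3; 5; 5; 6])) (Found 2 [:: 5; 10]) (Found 1 [:: 5; 5; 5]))
  (Found 1 [:: 5; 10]))) (Branch (Branch (Found 1 [:: 15; 20])
  (Found 0 [:: 12; 7; 12]) (Branch (Found 1 [:: 5; 10; 10])
  (Found 0 [:: 8; 7; 8; 8]) (Found 2 [:: 5; 10]) (Branch
  (Found 1 [:: 1; 5; 7; 3]) (Found 0 [:: 4; 6; 5; 6; 6])
  (Found 2 [:: 2; 6; 7]) (Found 3 [:: 5; 10]))) (Branch
  (Found 1 [:: 2; 11; 6]) (Found 0 [:: 8; 3; 6; 8]) (Branch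
  (Found 1 [:: 1; 7; 5; 3]) (Found 0 [:: 4; 6; 6; 5; 6]) (Found 3 [:: 5; 10])
  (Found 2 [:: 5; 5; 5])) (Found 2 [:: 5; 10]))) (Found 0 [:: 15; 20])
  (Branch (Branch (Found 2 [:: 15; 20]) (Found 0 [:: 8; 8; 7; 8])
  (Found 1 [:: 7; 5; 14]) (Branch (Found 2 [:: 2; 11; 6])
  (Found 0 [:: 4; 5; 6; 6; 6]) (Found 1 [:: 6; 5; 8; 9]) (Found 3 [:: 5; 10])))
  (Found 0 [:: 1; 11; 3]) (Found 1 [:: 5; 10]) (Branch (Branch
  (Found 3 [:: 15; 20]) (Found 0 [:: 4; 5; 6; 6; 6])
  (Found 1 [:: 6; 8; 5; 9]) (Found 2 [:: 8; 5; 11]))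
  (Found 0 [:: 1; 5; 7; 2]) (Found 1 [:: 2; 6; 7]) (Found 2 [:: 5; 10])))
  (Branch (Branch (Found 2 [:: 15; 20]) (Found 0 [:: 8; 6; 3; 8]) (Branch
  (Found 2 [:: 5; 10; 10]) (Found 0 [:: 4; 6; 6; 5; 6]) (Found 3 [:: 5; 10])
  (Found 1 [:: 4; 5; 4; 6])) (Found 1 [:: 8; 5; 11]))
  (Found 0 [:: 5; 10; 10]) (Branch (Branch (Found 3 [:: 15; 20])
  (Found 0 [:: 4; 6; 5; 6; 6]) (Found 2 [:: 7; 5; 14])
  (Found 1 [:: 4; 4; 5; 6])) (Found 0 [:: 1; 6; 7; 3]) (Found 2 [:: 5; 10])
  (Found 1 [:: 5; 5; 5])) (Found 1 [:: 5; 10]))) (Branch (Branch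
  (Found 1 [:: 15; 20]) (Branch (Found 1 [:: 8; 14; 13])
  (Found 2 [:: 15; 20]) (Found 0 [:: 1; 10; 10; 8]) (Branch
  (Found 1 [:: 1; 7; 7; 6]) (Found 2 [:: 5; 10; 10])
  (Found 0 [:: 3; 5; 5; 9; 8]) (Found 3 [:: 5; 10]))) (Found 0 [:: 7; 5; 14])
  (Branch (Found 1 [:: 2; 11; 6]) (Branch (Found 1 [:: 1; 7; 7; 6])
  (Found 3 [:: 15; 20]) (Found 0 [:: 3; 5; 9; 5; 8]) (Found 2 [:: 7; 5; 14]))
  (Found 0 [:: 6; 5; 8; 9]) (Found 2 [:: 5; 10]))) (Branch (Branch
  (Found 2 [:: 15; 20]) (Found 1 [:: 12; 7; 12]) (Found 0 [:: 1; 10; 10; 8])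
  (Branch (Found 2 [:: 2; 11; 6]) (Found 1 [:: 8; 3; 6; 8])
  (Found 0 [:: 3; 5; 5; 9; 8]) (Found 3 [:: 5; 10]))) (Found 1 [:: 15; 20])
  (Found 0 [:: 2; 10; 9]) (Branch (Branch (Found 3 [:: 15; 20])
  (Found 1 [:: 8; 6; 3; 8]) (Found 0 [:: 3; 5; 9; 5; 8])
  (Found 2 [:: 8; 5; 11])) (Found 1 [:: 5; 10; 10]) (Found 0 [:: 1; 5; 7; 4])
  (Found 2 [:: 5; 10]))) (Found 0 [:: 5; 10]) (Branch (Branch
  (Found 2 [:: 15; 20]) (Branch (Found 2 [:: 8; 14; 13])
  (Found 3 [:: 15; 20]) (Found 0 [:: 3; 9; 5; 5; 8])
  (Found 1 [:: 2; 5; 10; 6])) (Found 0 [:: 6; 8; 5; 9])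
  (Found 1 [:: 8; 5; 11])) (Branch (Branch (Found 3 [:: 15; 20])
  (Found 2 [:: 12; 7; 12]) (Found 0 [:: 3; 9; 5; 5; 8])
  (Found 1 [:: 2; 10; 5; 6])) (Found 2 [:: 15; 20]) (Found 0 [:: 1; 7; 5; 4])
  (Found 1 [:: 7; 5; 14])) (Found 0 [:: 2; 6; 7]) (Found 1 [:: 5; 10])))
  (Branch (Branch (Found 1 [:: 15; 20]) (Branch (Found 1 [:: 8; 14; 13])
  (Found 2 [:: 15; 20]) (Branch (Found 1 [:: 3; 9; 9; 7])
  (Found 2 [:: 1; 11; 3]) (Found 3 [:: 5; 10]) (Found 0 [:: 1; 5; 5; 6; 6]))
  (Found 0 [:: 2; 5; 10; 6])) (Branch (Found 1 [:: 5; 10; 10]) (Branch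
  (Found 1 [:: 3; 9; 9; 7]) (Found 3 [:: 15; 20]) (Found 2 [:: 2; 10; 9])
  (Found 0 [:: 1; 5; 6; 5; 6])) (Found 2 [:: 5; 10])
  (Found 0 [:: 4; 5; 4; 6])) (Found 0 [:: 8; 5; 11])) (Branch (Branch
  (Found 2 [:: 15; 20]) (Found 1 [:: 12; 7; 12]) (Branch
  (Found 2 [:: 5; 10; 10]) (Found 1 [:: 8; 7; 8; 8]) (Found 3 [:: 5; 10])
  (Found 0 [:: 1; 5; 5; 6; 6])) (Found 0 [:: 2; 10; 5; 6]))
  (Found 1 [:: 15; 20]) (Branch (Branch (Found 3 [:: 15; 20])
  (Found 1 [:: 8; 8; 7; 8]) (Found 2 [:: 7; 5; 14])
  (Found 0 [:: 1; 5; 6; 5; 6])) (Found 1 [:: 1; 11; 3]) (Found 2 [:: 5; 10])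
  (Found 0 [:: 3; 5; 5; 6])) (Found 0 [:: 7; 5; 14])) (Branch (Branch
  (Found 2 [:: 15; 20]) (Branch (Found 2 [:: 8; 14; 13])
  (Found 3 [:: 15; 20]) (Found 1 [:: 1; 10; 10; 8])
  (Found 0 [:: 1; 6; 5; 5; 6])) (Found 1 [:: 7; 5; 14])
  (Found 0 [:: 4; 4; 5; 6])) (Branch (Branch (Found 3 [:: 15; 20])
  (Found 2 [:: 12; 7; 12]) (Found 1 [:: 1; 10; 10; 8])
  (Found 0 [:: 1; 6; 5; 5; 6])) (Found 2 [:: 15; 20]) (Found 1 [:: 2; 10; 9])
  (Found 0 [:: 3; 5; 5; 6])) (Found 1 [:: 5; 10]) (Found 0 [:: 5; 5; 5]))
  (Found 0 [:: 5; 10]))).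

Lemma zero_block_trie5_covers : trie_covers 5 [::] zero_block_trie5.
Proof. vm_compute. reflexivity. Qed.

Definition square_weighted_block (c : nat -> nat) i (w : seq nat) : bool :=
  [&& 0 < size w, i + size w <= 5, all (fun t => ~~ (625 %| t ^ 2)) w
    & 625 %| \sum_(k < size w) nth 0 w k ^ 2 * c (i + k)].

Lemma square_weighted_block_dvd25 c k : k < 5 -> 25 %| c k ->
  square_weighted_block c k [:: 5].
Proof.
move=> lt_k5 c25; rewrite /square_weighted_block addn1 lt_k5 big_ord1 addn0.
by rewrite (_ : 625 = 25 * 25) // dvdn_mul.
Qed.

(* Multiplying [c k] by the unit square [s k ^ 2] is undone by the weights. *)
Lemma square_weighted_block_rescale c s i ts :
  (forall k, k < 5 -> coprime (s k) 5) ->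
  zero_block_cert [seq s k ^ 2 * c k %% 625 | k <- iota 0 5] i ts ->
  square_weighted_block c i
    [seq nth 0 ts k * s (i + k) | k <- iota 0 (size ts)].
Proof.
set rs := map _ _; set w := map _ _ => s5 /and4P[ts_gt0 ts_le ts_ok ts_sum].
rewrite size_map size_iota in ts_le.
have ik_lt k : k < size ts -> i + k < 5.
  by move=> lt_k; apply: leq_trans ts_le; rewrite ltn_add2l.
have size_w : size w = size ts by rewrite size_map size_iota.
have w_nth k : k < size ts -> nth 0 w k = nth 0 ts k * s (i + k).
  by move=> lt_k; rewrite (nth_map 0) ?nth_iota ?size_iota.
apply/and4P; rewrite size_w; split=> //.
  apply/(all_nthP 0)=> k; rewrite size_w => lt_k; rewrite w_nth //.
  apply: nonzero_square_mod625; first exact: (allP ts_ok) (mem_nth 0 lt_k).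
  exact/s5/ik_lt.
have term_mod (k : 'I_(size ts)) : nth 0 w k ^ 2 * c (i + k)
    = nth 0 ts k ^ 2 * nth 0 (drop i rs) k %[mod 625].
  rewrite w_nth // nth_drop (nth_map 0) ?nth_iota ?size_iota ?ik_lt //.
  by rewrite modnMmr expnMn -mulnA.
by rewrite /dvdn -modn_summ (eq_bigr _ (fun k _ => term_mod k)) modn_summ
  -weighted_sumE.
Qed.

Lemma exists_square_weighted_block c :
  exists i w, square_weighted_block c i w.
Proof.
have [[k c25] | no25] := altP (@existsP _ (fun k : 'I_5 => 25 %| c k)).
  by exists k, [:: 5]; apply: square_weighted_block_dvd25.
pose s k := square_normalizer (c k %% 625).
have {no25}normal k : k < 5 ->
    coprime (s k) 5 /\ s k ^ 2 * c k %% 625 \in square_class_reps.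
  move=> lt_k5; apply: square_normalizerP.
  by apply: contra no25 => c25; apply/existsP; exists (Ordinal lt_k5).
pose rs := [seq s k ^ 2 * c k %% 625 | k <- iota 0 5].
have rs_reps : all (mem square_class_reps) rs.
  by apply/allP=> r /mapP[k]; rewrite mem_iota => /andP[_ /normal[_ ?]] ->.
have [i [ts cert]] :=
  trie_coversP _ _ _ zero_block_trie5_covers rs (size_map _ _) rs_reps.
exists i; eexists; apply: (square_weighted_block_rescale c s i ts _ cert).
by move=> k /normal[].
Qed.

Lemma Zp_nat_eq0 n m : 1 < n -> ((m%:R : 'Z_n) == 0)%R = (n %| m).
Proof. by move=> n_gt1; rewrite -val_eqE /= val_Zp_nat. Qed.


Lemma natr_sq_in_Sq_star n t : 1 < n -> ~~ (n %| t ^ 2) ->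
  ((t ^ 2)%:R : 'Z_n)%R \in Sq_star n.
Proof.
move=> n_gt1 t2_nz; rewrite in_setD1 Zp_nat_eq0 // t2_nz /=.
by apply/imsetP; exists (t%:R)%R; rewrite // natrX.
Qed.

Lemma C_works_Sq_star_625 K : 0 < K -> C_works (Sq_star ((25 * K) ^ 2)) 5.
Proof.
move=> K_gt0; set n := (25 * K) ^ 2.
have n_gt1 : 1 < n.
  by rewrite /n expnMn (leq_trans _ (leq_pmulr _ _)) // expn_gt0 K_gt0.
apply/forallP=> s; pose c k := val (nth 0%R s k).
have [i [w /and4P[w_gt0 w_le w_ok w_sum]]] := exists_square_weighted_block c.
apply/existsP; exists (inord i); apply/existsP; exists (inord (i + size w)).
rewrite !inordK ?ltnS // ?(leq_trans (leq_addr _ _) w_le) //.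
rewrite -{1}[i]addn0 ltn_add2l w_gt0 /=.
set y := drop i (take (i + size w) s).
have size_y : size y = size w.
  by rewrite size_drop size_takel ?size_tuple // addKn.
have y_nth k : k < size w -> nth 0%R y k = ((c (i + k))%:R)%R.
  by move=> lt_k; rewrite natr_Zp nth_drop nth_take // ltn_add2l.
rewrite /weighted_zero_sum size_y w_gt0 /=; apply/existsP.
pose a k : 'Z_n := (((K * nth 0 w k) ^ 2)%N%:R)%R.
exists [tuple a k | k < size w]; apply/andP; split.
  apply/allP=> _ /mapP[k _ ->]; apply: natr_sq_in_Sq_star => //.
  rewrite /n !expnMn [in X in X %| _]mulnC dvdn_pmul2l ?expn_gt0 ?K_gt0 //.
  exact: (allP w_ok) (mem_nth 0 (ltn_ord k)).
have n_dvd : n %| K ^ 2 * \sum_(k < size w) nth 0 w k ^ 2 * c (i + k).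
  by rewrite /n expnMn mulnC dvdn_pmul2l ?expn_gt0 ?K_gt0.
rewrite (eq_bigr (fun k : 'I_(size w) =>
    ((K ^ 2 * (nth 0 w k ^ 2 * c (i + k)))%N%:R)%R)) => [|k _].
  by rewrite -natr_sum -big_distrr Zp_nat_eq0.
by rewrite -(tnth_nth 0%R) tnth_mktuple y_nth // /a -natrM expnMn mulnA.
Qed.

Theorem mainTheorem19 (n : nat) :
  (exists m : nat, n = (m ^ 2)%N) -> (5 ^ 4 %| n)%N ->
  (exists t : nat, C_works (Sq_star n) t) /\ (C_A (Sq_star n) <= 7)%N.
Proof.
move=> n_sq n_625.
suff [t t_le7 n_t] : exists2 t, t <= 7 & C_works (Sq_star n) t.
  by split; [exists t | apply: leq_trans t_le7; exact: C_A_leq].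
have [-> | n_gt0] := posnP n; first by exists 2; last exact: C_works_Sq_star0.
have [K K_gt0 ->] := square_625_multiple _ n_sq n_625 n_gt0.
by exists 5; last exact: C_works_Sq_star_625.
Qed.
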